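(* Suppose $m$ hypotheses are tested by the Benjamini–Hochberg procedure at nominal level $\alpha$ under conditions ensuring that its global FDR satisfies $\mathbb{E}\big[V/\max\{1,R\}\big]\le\alpha$. Then for any partition of the hypotheses into classes $1,\dots,K$, the Benjamini–Hochberg procedure satisfies $$\mathbb{E}\left[\frac{\sum_{k=1}^KV_k}{\sum_{k=1}^K\max\{1,R_k\}}\right]\le\alpha .$$
   Context: Hypotheses are partitioned into $K$ classes. For class $k$, $\mathbf R_k$ is the set of hypotheses in class $k$ rejected by the procedure and $\mathbf T^k_0$ the set of true nulls in class $k$; $V_k=|\mathbf R_k\cap\mathbf T^k_0|$, $R_k=|\mathbf R_k|$, $V=\sum_kV_k$, $R=\sum_kR_k$. *)

From HB Require Import structures.
From mathcomp Require Import all_boot all_order all_algebra.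
From mathcomp Require Import all_classical all_reals all_analysis.
Set Implicit Arguments. Unset Strict Implicit. Unset Printing Implicit Defensive.
Import Order.TTheory GRing.Theory Num.Theory.
Local Open Scope ring_scope.

Section BH.
Variables (R : realType) (m : nat).

Definition BH_count (alpha : R) (p : 'I_m -> R) (k : nat) : nat :=
  #|[set i : 'I_m | p i <= alpha * k%:R / m%:R]|.

Definition BH_khat (alpha : R) (p : 'I_m -> R) : nat :=
  \max_(k < m.+1 | (k <= BH_count alpha p k)%N) k.

Definition BH_rej (alpha : R) (p : 'I_m -> R) : {set 'I_m} :=
  [set i : 'I_m | (0 < BH_khat alpha p)%N && (p i <= alpha * (BH_khat alpha p)%:R / m%:R)].

Definition BH_V (alpha : R) (p : 'I_m -> R) (H0 : {set 'I_m}) : nat :=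
  #|BH_rej alpha p :&: H0|.
Definition BH_R (alpha : R) (p : 'I_m -> R) : nat := #|BH_rej alpha p|.

Definition BH_Vk K (cls : 'I_m -> 'I_K) (alpha : R) (p : 'I_m -> R)
  (H0 : {set 'I_m}) (k : 'I_K) : nat :=
  #|BH_rej alpha p :&: H0 :&: [set i | cls i == k]|.
Definition BH_Rk K (cls : 'I_m -> 'I_K) (alpha : R) (p : 'I_m -> R)
  (k : 'I_K) : nat :=
  #|BH_rej alpha p :&: [set i | cls i == k]|.

Definition FDP (alpha : R) (p : 'I_m -> R) (H0 : {set 'I_m}) : R :=
  (BH_V alpha p H0)%:R / (maxn 1 (BH_R alpha p))%:R.

Definition classFDP K (cls : 'I_m -> 'I_K) (alpha : R) (p : 'I_m -> R)
  (H0 : {set 'I_m}) : R :=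
  (\sum_(k < K) (BH_Vk cls alpha p H0 k)%:R) /
  (\sum_(k < K) (maxn 1 (BH_Rk cls alpha p k))%:R).

End BH.

From HB Require Import structures.
From mathcomp Require Import all_boot all_order all_algebra.
From mathcomp Require Import all_classical all_reals all_analysis.
Import Order.TTheory GRing.Theory Num.Theory.
Local Open Scope ring_scope.

(* The bound holds pointwise, for every rejection set: the numerators agree,
   since the V_k add up to V, and once V > 0 some class is nonempty, whence
   sum_k max(1, R_k) >= max(1, sum_k R_k) = max(1, R).  Integrating this
   pointwise domination gives the claim, so neither the range of alpha nor the
   measurability of the p-values is used. *)

Lemma sum_card_setI_class (m K : nat) (cls : 'I_m -> 'I_K) (A : {set 'I_m}) :
  (\sum_(k < K) #|A :&: [set i | cls i == k]| = #|A|)%N.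
Proof.
rewrite -sum1_card (partition_big cls xpredT) //=.
by apply: eq_bigr => k _; rewrite -sum1_card; apply: eq_bigl => i; rewrite !inE.
Qed.

Lemma leq_maxn1_sum {I : finType} (i0 : I) (r : I -> nat) :
  (maxn 1 (\sum_i r i) <= \sum_i maxn 1 (r i))%N.
Proof.
rewrite geq_max; apply/andP; split; last by apply: leq_sum => i _; exact: leq_maxr.
by rewrite (bigD1 i0) //= (leq_trans (leq_maxl 1 (r i0))) ?leq_addr.
Qed.

Lemma classFDP_le_FDP (R : realType) (m K : nat) (cls : 'I_m -> 'I_K)
    (alpha : R) (p : 'I_m -> R) (H0 : {set 'I_m}) :
  classFDP cls alpha p H0 <= FDP alpha p H0.
Proof.
rewrite /classFDP /FDP -!natr_sum.
have -> : (\sum_(k < K) BH_Vk cls alpha p H0 k = BH_V alpha p H0)%N.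
  exact: sum_card_setI_class.
have [->|V_gt0] := posnP (BH_V alpha p H0); first by rewrite !mul0r.
have [i /setIP[_ _]] : exists i, i \in BH_rej alpha p :&: H0.
  by apply/set0Pn; rewrite -card_gt0.
have denom_le : (maxn 1 (BH_R alpha p) <=
                 \sum_(k < K) maxn 1 (BH_Rk cls alpha p k))%N.
  by rewrite /BH_R -(sum_card_setI_class _ _ cls) (leq_maxn1_sum (cls i)).
apply: ler_wpM2l => //.
have maxR_gt0 : (0 < maxn 1 (BH_R alpha p))%N by rewrite leq_max.
by rewrite lef_pV2 ?posrE ?ltr0n ?ler_nat // (leq_trans maxR_gt0 denom_le).
Qed.

Lemma ge0_le_integralT (d : measure_display) (T : measurableType d)
    (R : realType) (mu : {measure set T -> \bar R}) (f g : T -> \bar R) :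
  (forall x, 0 <= f x)%E -> (forall x, f x <= g x)%E ->
  (\int[mu]_x f x <= \int[mu]_x g x)%E.
Proof.
move=> f0 fg; have g0 x : (0 <= g x)%E by apply: le_trans (fg x).
rewrite !ge0_integralTE //.
apply: le_ereal_sup => _ [h /= hf <-]; exists h => //= x.
exact: le_trans (hf x) (fg x).
Qed.

Theorem corollary6 (R : realType) (d : measure_display) (T : measurableType d)
  (P : probability T R) (m K : nat) (alpha : R)
  (pv : 'I_m -> T -> R) (H0 : {set 'I_m}) (cls : 'I_m -> 'I_K) :
  0 < alpha < 1 ->
  (forall i, measurable_fun setT (pv i)) ->
  (\int[P]_w (FDP alpha (fun i => pv i w) H0)%:E <= alpha%:E)%E ->
  (\int[P]_w (classFDP cls alpha (fun i => pv i w) H0)%:E <= alpha%:E)%E.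
Proof.
move=> _ _; apply: le_trans; apply: ge0_le_integralT => w.
  by rewrite lee_fin /classFDP divr_ge0 // sumr_ge0.
by rewrite lee_fin classFDP_le_FDP.
Qed.
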